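(* Let $s\in\mathscr S_+^\circ$ with $\operatorname{supp}(s)=\{d_1>\cdots>d_m\}$, and let $s'\in\mathscr S_+$ satisfy $\operatorname{supp}(s')\subsetneq\operatorname{supp}(s)$ and $\operatorname{supp}(s)\setminus\operatorname{supp}(s')\subseteq\{d_{2i}: 1\le 2i\le m\}$. Then $s'\notin\mathscr S_+^\circ$ and $\lfloor s'\rfloor=s$. In particular $s\prec s'$ and $\mathfrak d(s')=\mathfrak d(s)$.
   Context: $\omega=\{0,1,\dots\}$, $[m]=\{1,\dots,m\}$. A finite sign sequence is $s\in\{-,0,+\}^\omega$ with finitely many nonzero entries; $\mathscr S$ their set; $\operatorname{supp}(s)=\{i:s_i\ne0\}$; $\mathscr S_+=\mathscr S\cap\{0,+\}^\omega$. $\mathrm{SC}(t)$ = number of pairs $i<j$ with $\{t_i,t_j\}=\{-,+\}$ and $t_k=0$ for $i<k<j$. $\mathfrak d(s)=\max\{\mathrm{SC}(t):t\in\mathscr S,\ t_i\in\{-,0,s_i\}\ \forall i\}$. $\mathscr S_+^\circ=\{s\in\mathscr S_+:\mathfrak d(s)=\#\operatorname{supp}(s)\}$. Interval decomposition of $s\in\mathscr S_+$: $\operatorname{supp}(s)=X_0\amalg\cdots\amalg X_k$ into intervals with $0\in X_0$ if $0\in\operatorname{supp}(s)$ else $X_0=\emptyset$, $X_i\neq\emptyset$ for $i\in[k]$, $\min X_i-\max X_{i-1}\ge2$ ($\max\emptyset=-\infty$). $\lfloor X_i\rfloor=\{\min X_i-1\}\amalg X_i$ if $\#X_i$ odd,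 else $X_i$; $\lceil X_i\rceil=X_i\amalg\{\max X_i+1\}$ if $\#X_i$ odd, else $X_i$; $\operatorname{supp}(\lfloor s\rfloor)=X_0\amalg\lfloor X_1\rfloor\amalg\cdots\amalg\lfloor X_k\rfloor$, $\operatorname{supp}(\lceil s\rceil)=X_0\amalg\lceil X_1\rceil\amalg\cdots\amalg\lceil X_k\rceil$. On $\mathscr S_+^\circ$: $s\preceq_0 s'$ iff, writing supports in decreasing order $\{d_1>\cdots>d_m\}$, $\{d'_1>\cdots>d'_{m'}\}$, $m\le m'$ and $d_i\le d'_i$ for $i\in[m]$. On $\mathscr S_+$: $s\preceq s'$ iff $s=s'$, or $s\ne s'$ and $\lceil s\rceil\preceq_0\lfloor s'\rfloor$; $s\prec s'$ means $s\preceq s'$, $s\neq s'$. *)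

From mathcomp Require Import all_boot all_order finmap.
From Stdlib Require Import ClassicalEpsilon.
Set Implicit Arguments. Unset Strict Implicit. Unset Printing Implicit Defensive.
Local Open Scope fset_scope.

Inductive sgn := Neg | Zer | Pos.

Definition isZ (a : sgn) : bool := if a is Zer then true else false.
Definition opp_nz (a b : sgn) : bool :=
  match a, b with Neg, Pos | Pos, Neg => true | _, _ => false end.

(* A finite sign sequence t in S is represented by a list; t_i := nth Zer t i
   (all entries beyond the list are 0). *)
Definition tnth0 (t : seq sgn) (i : nat) : sgn := nth Zer t i.

(* SC(t): number of pairs i<j with {t_i,t_j} = {-,+} and t_k = 0 for i<k<j.
   (Pairs involving positions beyond size t never count, since t_j = 0 there.) *)
Definition SC (t : seq sgn) : nat :=
  \sum_(0 <= i < size t) \sum_(i.+1 <= j < size t)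
     (opp_nz (tnth0 t i) (tnth0 t j)
      && all (fun k => isZ (tnth0 t k)) (iota i.+1 (j - i.+1))).

(* An element s of S_+ is represented by its support supp(s), a finite set of
   naturals (s_i = + iff i \in X, else s_i = 0). *)
Definition sval (X : {fset nat}) (i : nat) : sgn := if i \in X then Pos else Zer.

Definition admissible (X : {fset nat}) (t : seq sgn) : Prop :=
  forall i, tnth0 t i = Neg \/ tnth0 t i = Zer \/ tnth0 t i = sval X i.

Definition is_dmax (X : {fset nat}) (n : nat) : Prop :=
  (exists t, admissible X t /\ SC t = n) /\
  (forall t, admissible X t -> SC t <= n).

(* frak d (s) := the maximum (chosen by classical description; the maximum
   exists and is unique) *)
Definition dd (X : {fset nat}) : nat := epsilon (inhabits 0%N) (is_dmax X).

Definition inSo (X : {fset nat}) : Prop := dd X = #|` X|.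

(* support in decreasing order d_1 > ... > d_m ; d_k = nth 0 (dseq X) k.-1 *)
Definition dseq (X : {fset nat}) : seq nat := sort geq (enum_fset X).

Definition maxS (X : {fset nat}) : nat := \max_(i <- enum_fset X) i.

(* [a,b] is one of the intervals X_i of the interval decomposition of X
   (a maximal interval of consecutive elements of X) *)
Definition is_comp (X : {fset nat}) (a b : nat) : bool :=
  [&& a <= b, all (fun k => k \in X) (iota a (b.+1 - a)),
      (a == 0) || (a.-1 \notin X) & b.+1 \notin X].

(* a is the minimum of an interval X_i with i >= 1 (i.e. not containing 0)
   of odd cardinality *)
Definition odd_comp_min (X : {fset nat}) (a : nat) : bool :=
  (0 < a) && has (fun b => is_comp X a b && odd (b.+1 - a)) (iota a (maxS X).+1).

(* b is the maximum of an interval X_i with i >= 1 of odd cardinality *)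
Definition odd_comp_max (X : {fset nat}) (b : nat) : bool :=
  has (fun a => [&& 0 < a, is_comp X a b & odd (b.+1 - a)]) (iota 0 b.+1).

Definition floorS (X : {fset nat}) : {fset nat} :=
  X `|` [fset a.-1 | a in X & odd_comp_min X a].
Definition ceilS (X : {fset nat}) : {fset nat} :=
  X `|` [fset b.+1 | b in X & odd_comp_max X b].

Definition le0 (X Y : {fset nat}) : bool :=
  (size (dseq X) <= size (dseq Y)) &&
  all (fun i => nth 0 (dseq X) i <= nth 0 (dseq Y) i) (iota 0 (size (dseq X))).

Definition preceq (X Y : {fset nat}) : Prop := X = Y \/ (X <> Y /\ le0 (ceilS X) (floorS Y)).
Definition prec (X Y : {fset nat}) : Prop := preceq X Y /\ X <> Y.

(* An admissible sign sequence with [+] on a set P of pairwise non-adjacent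
   positions of X and [-] in between has 2|P| - [0 \in P] sign changes.  With
   X enumerated as d_0 > d_1 > ... (0-based ranks, so the paper's d_{2i} have odd
   rank), taking P = the even-ranked elements, possibly shifted by one rank
   after a position where d_{2k} > d_{2k+1} + 1, shows that d(X) = |X| forces
   d_{2k} = d_{2k+1} + 1, and d_{last} = 0 when |X| is odd.  Hence the parity of
   the rank of the bottom of a maximal run of X (or of an s' obtained by
   deleting odd-ranked elements) is the parity of the run's length minus one:
   runs of s not containing 0 have even length, so ceil s = s, and a deleted y
   is exactly the point floor s' adds below the odd run of s' starting at y+1.
   Finally, the even-ranked elements all survive in s', so d(s') >= |s| = d(s),
   while d is monotone. *)

From Pilot Require Import Defs.
From mathcomp Require Import all_boot all_order finmap.
From Stdlib Require Import ClassicalEpsilon Classical Lia.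
From mathcomp Require Import zify.
(* Re-imported so that [tnth0] refers to [Defs.tnth0], not to the lemma of [tuple]. *)
Import Defs.
Set Implicit Arguments. Unset Strict Implicit.
Local Open Scope fset_scope.
(* [fset_scope] reinterprets [+] on finite maps. *)
Local Open Scope nat_scope.

Lemma ex_max_bounded (P : nat -> Prop) B :
  P 0 -> (forall n, P n -> n <= B) -> exists n, P n /\ forall m, P m -> m <= n.
Proof.
elim: B P => [|B IH] P P0 leB; first by exists 0; split => // m /leB.
case: (classic (P B.+1)) => [PB|nPB]; first by exists B.+1.
apply: IH => // n Pn; have := leB _ Pn; rewrite leq_eqVlt => /orP[/eqP En|] //.
by rewrite En in Pn.
Qed.

Lemma sum_leq_nat n M : \sum_(0 <= i < n) (i <= M) = minn n M.+1.
Proof.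
elim: n => [|n IH]; first by rewrite big_geq.
by rewrite big_nat_recr //= IH; case: (leqP n M) => le_nM; lia.
Qed.

Lemma sum_mem_iota (P : {fset nat}) n : (forall x, x \in P -> x < n) ->
  \sum_(0 <= i < n) (i \in P : nat) = #|` P|.
Proof.
move=> lt_n; rewrite -big_mkcondr /= sum1_count -size_filter.
apply/perm_size/uniq_perm; rewrite ?filter_uniq ?iota_uniq ?fset_uniq //.
by move=> x; rewrite mem_filter mem_iota add0n subn0; apply/andb_idr => /lt_n.
Qed.

Lemma le_maxS (X : {fset nat}) x : x \in X -> x <= maxS X.
Proof. by move=> xX; apply: (@leq_bigmax_seq _ (enum_fset X) xpredT id x). Qed.

Lemma opp_nz_Pos a b : opp_nz a b -> a = Pos \/ b = Pos.
Proof. by case: a; case: b => // _; [right | left]. Qed.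

(* Only the first nonzero entry after position [i] can close a sign change. *)
Lemma SC_row_le1 (t : seq sgn) i n :
  \sum_(i.+1 <= j < n)
     (opp_nz (tnth0 t i) (tnth0 t j)
      && all (fun k => isZ (tnth0 t k)) (iota i.+1 (j - i.+1))) <= 1.
Proof.
elim: n => [|n IH]; first by rewrite big_geq.
case: (leqP i.+1 n) => [le_in|lt_ni]; last by rewrite big_geq.
rewrite big_nat_recr //=.
case: (boolP (opp_nz _ _ && _)) => [/andP[_ /allP zeros]|_]; last by rewrite addn0.
rewrite big1_seq ?add0n // => j; rewrite mem_index_iota => /andP[le_ij lt_jn].
have : j \in iota i.+1 (n - i.+1) by rewrite mem_iota subnKC // le_ij.
by move/zeros; case: (tnth0 t j) => //; case: (tnth0 t i).
Qed.

Lemma SC_le_maxS (X : {fset nat}) (t : seq sgn) : admissible X t -> SC t <= (maxS X).+1.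
Proof.
move=> adm.
have noPos i : maxS X < i -> tnth0 t i <> Pos.
  move=> lt_i; case: (adm i) => [->|[->|->]] //; rewrite /sval.
  by case: ifP => // /le_maxS; rewrite leqNgt lt_i.
apply: (@leq_trans (\sum_(0 <= i < size t) (i <= maxS X))); last first.
  by rewrite sum_leq_nat geq_minr.
apply: leq_sum => i _; case: (leqP i (maxS X)) => [_|lt_i]; first exact: SC_row_le1.
rewrite big1_seq // => j /andP[_]; rewrite mem_index_iota => /andP[lt_ij _].
case: (boolP (_ && _)) => // /andP[/opp_nz_Pos [] /[swap] _].
  by move/(noPos _ lt_i).
by move/(noPos _ (ltn_trans lt_i lt_ij)).
Qed.

Lemma dd_spec (X : {fset nat}) : is_dmax X (dd X).
Proof.
apply: epsilon_spec.
have SC0 : exists t, admissible X t /\ SC t = 0.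
  by exists [::]; split; [move=> i; right; left; exact: nth_nil | rewrite /SC big_geq].
have bounded n : (exists t, admissible X t /\ SC t = n) -> n <= (maxS X).+1.
  by move=> [t [adm <-]]; exact: SC_le_maxS.
have [_ [[t [adm <-]] max_n]] := ex_max_bounded SC0 bounded.
by exists (SC t); split; [exists t | move=> t' adm'; apply: max_n; exists t'].
Qed.

Lemma SC_le_dd (X : {fset nat}) (t : seq sgn) : admissible X t -> SC t <= dd X.
Proof. exact: (dd_spec X).2. Qed.

Lemma admissible_subset (X Y : {fset nat}) (t : seq sgn) :
  Y `<=` X -> admissible Y t -> admissible X t.
Proof.
move=> /fsubsetP sub adm i; case: (adm i) => [|[|]]; [by left | by right; left |].
rewrite /sval; case: ifP => [/sub -> ->|_ ->]; [by right; right | by right; left].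
Qed.

Lemma dd_subset (X Y : {fset nat}) : Y `<=` X -> dd Y <= dd X.
Proof.
move=> sub; have [[t [adm <-]] _] := dd_spec Y.
exact: SC_le_dd (admissible_subset sub adm).
Qed.

Lemma SC_ge_adjacent (t : seq sgn) :
  \sum_(0 <= i < size t) opp_nz (tnth0 t i) (tnth0 t i.+1) <= SC t.
Proof.
apply: leq_sum => i _; case: (ltnP i.+1 (size t)) => [lt_it|le_ti].
  by rewrite big_ltn // subnn /= andbT leq_addr.
by rewrite /tnth0 [nth Zer t i.+1]nth_default //; case: (nth Zer t i).
Qed.

Lemma dd_ge_sparse (X P : {fset nat}) :
  P `<=` X -> (forall x, x \in P -> x.+1 \notin P) ->
  (#|` P|).*2 <= dd X + (0 \in P).
Proof.
move=> /fsubsetP sub sparse; set L := (maxS P).+2.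
pose t := mkseq (fun i => if i \in P then Pos else Neg) L.
have tE i : tnth0 t i = if i < L then (if i \in P then Pos else Neg) else Zer.
  rewrite /tnth0; case: ltnP => iL; first by rewrite nth_mkseq.
  by rewrite nth_default // size_mkseq.
have leP x : x \in P -> x.+1 < L by move/le_maxS; rewrite /L ltnS.
have adm : admissible X t.
  move=> i; rewrite tE; case: ifP => _; last by right; left.
  by case: ifP => iP; [right; right; rewrite /sval sub | left].
have change i : i < L ->
    (i \in P) + (i.+1 \in P) <= opp_nz (tnth0 t i) (tnth0 t i.+1).
  move=> iL; rewrite !tE iL; case: (boolP (i \in P)) => [iP|_].
    by rewrite (negbTE (sparse _ iP)) leP.
  case: (boolP (i.+1 \in P)) => [i1P|_]; last by case: ifP.
  by rewrite (ltnW (leP _ i1P)).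
have cardE n : maxS P < n -> \sum_(0 <= i < n) (i \in P : nat) = #|` P|.
  by move=> lt_n; apply: sum_mem_iota => x /le_maxS /leq_ltn_trans; apply.
rewrite -addnn -{1}(cardE L) ?ltnS // -(cardE L.+1) ?ltnS ?leqW //.
rewrite (big_nat_recl L) // addnCA addnC -big_split leq_add2r.
apply: leq_trans (SC_le_dd adm); apply: leq_trans (SC_ge_adjacent t).
rewrite size_mkseq big_seq [leqRHS]big_seq; apply: leq_sum => i.
by rewrite mem_index_iota => /andP[_ /change].
Qed.

Section DecreasingSupport.
Variable X : {fset nat}.

Lemma mem_dseq x : (x \in dseq X) = (x \in X).
Proof. by rewrite mem_sort. Qed.

Lemma uniq_dseq : uniq (dseq X).
Proof. by rewrite sort_uniq fset_uniq. Qed.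

Lemma size_dseq : size (dseq X) = #|` X|.
Proof. by rewrite size_sort. Qed.

Lemma dseq_ltn i j : i < j -> j < size (dseq X) ->
  nth 0 (dseq X) j < nth 0 (dseq X) i.
Proof.
have gt_trans : transitive (fun x y : nat => y < x).
  by move=> y x z /= lt_yx lt_zy; apply: ltn_trans lt_zy lt_yx.
have : sorted (fun x y : nat => y < x) (dseq X).
  rewrite -rev_sorted ltn_sorted_uniq_leq rev_uniq uniq_dseq rev_sorted.
  by apply: sort_sorted => x y; apply: leq_total.
move=> /(sorted_ltn_nth gt_trans 0) mono lt_ij lt_j.
by apply: mono; rewrite // inE (ltn_trans lt_ij lt_j).
Qed.

Lemma dseq_gap i j : i.+1 < j -> j < size (dseq X) ->
  (nth 0 (dseq X) j).+1 < nth 0 (dseq X) i.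
Proof.
move=> lt_ij lt_j; apply: leq_ltn_trans (dseq_ltn lt_ij lt_j) _.
exact: dseq_ltn (ltn_trans lt_ij lt_j).
Qed.

Lemma nth_dseq_gt0 i : i.+1 < size (dseq X) -> 0 < nth 0 (dseq X) i.
Proof. by move/(dseq_ltn (ltnSn i)); apply: leq_ltn_trans. Qed.

Lemma nth_dseq_mem i : i < size (dseq X) -> nth 0 (dseq X) i \in X.
Proof. by move=> lt_i; rewrite -mem_dseq mem_nth. Qed.

Lemma index_dseq_lt x : x \in X -> index x (dseq X) < size (dseq X).
Proof. by rewrite index_mem mem_dseq. Qed.

Lemma nth_index_dseq x : x \in X -> nth 0 (dseq X) (index x (dseq X)) = x.
Proof. by move=> xX; rewrite nth_index // mem_dseq. Qed.

Lemma index_nth_dseq i : i < size (dseq X) -> index (nth 0 (dseq X) i) (dseq X) = i.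
Proof. by move=> lt_i; rewrite index_uniq // uniq_dseq. Qed.

Lemma index_dseq_succ x : x \in X -> x.+1 \in X ->
  index x (dseq X) = (index x.+1 (dseq X)).+1.
Proof.
move=> xX x1X; have lt_i := index_dseq_lt x1X; have lt_j := index_dseq_lt xX.
have di := nth_index_dseq x1X; have dj := nth_index_dseq xX.
set i := index x.+1 _ in lt_i di *; set j := index x _ in lt_j dj *.
case: (ltngtP i j) => [lt_ij|lt_ji|eq_ij]; last by move: di; rewrite eq_ij dj; lia.
  case: (ltngtP i.+1 j) lt_ij => // lt_i1j _.
  have := dseq_ltn lt_i1j lt_j; have := dseq_ltn (ltnSn i) (ltn_trans lt_i1j lt_j).
  by rewrite di dj; lia.
by have := dseq_ltn lt_ji lt_i; rewrite di dj; lia.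
Qed.

Lemma index_dseq_run x n : (forall l, l <= n -> x + l \in X) ->
  index x (dseq X) = index (x + n) (dseq X) + n.
Proof.
elim: n => [|n IH] run; first by rewrite !addn0.
rewrite IH => [|l le_ln]; last by apply: run; apply: leqW.
rewrite index_dseq_succ ?addnS ?addSn //; first by apply: run.
by rewrite -addnS; apply: run.
Qed.

End DecreasingSupport.

Lemma is_compP (X : {fset nat}) a b :
  reflect [/\ a <= b, forall k, a <= k <= b -> k \in X,
             (a == 0) || (a.-1 \notin X) & b.+1 \notin X]
          (is_comp X a b).
Proof.
apply: (iffP and4P) => -[le_ab run a1X b1X]; split => //.
  by move=> k le_k; apply: (allP run); rewrite mem_iota; lia.
by apply/allP => k; rewrite mem_iota => le_k; apply: run; lia.
Qed.

Lemma odd_comp_minP (X : {fset nat}) a :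
  reflect (0 < a /\ exists2 b, is_comp X a b & odd (b.+1 - a)) (odd_comp_min X a).
Proof.
apply: (iffP andP) => -[a_gt0 comp]; split => //.
  by case/hasP: comp => b _ /andP[]; exists b.
case: comp => b comp_ab odd_ab; apply/hasP; exists b; last by rewrite comp_ab.
case/is_compP: comp_ab => le_ab run _ _; rewrite mem_iota.
by have := le_maxS (run b _); rewrite le_ab leqnn => /(_ isT); lia.
Qed.

Lemma odd_comp_maxP (X : {fset nat}) b :
  reflect (exists2 a, 0 < a & is_comp X a b && odd (b.+1 - a)) (odd_comp_max X b).
Proof.
apply: (iffP hasP) => [[a _ /and3P[a_gt0 comp_ab odd_ab]]|[a a_gt0 /andP[comp_ab odd_ab]]].
  by exists a; rewrite ?comp_ab.
exists a; last by rewrite a_gt0 comp_ab.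
by case/is_compP: comp_ab => le_ab _ _ _; rewrite mem_iota; lia.
Qed.

Lemma fset_run_end (Y : {fset nat}) a : a \in Y ->
  exists2 b, a <= b & (forall k, a <= k <= b -> k \in Y) /\ b.+1 \notin Y.
Proof.
move=> aY; have ex_end : exists b, (a <= b) && (b.+1 \notin Y).
  by exists (maxS Y); rewrite le_maxS //=; apply/negP => /le_maxS; lia.
case: (ex_minnP ex_end) => b /andP[le_ab b1Y] min_b; exists b => //; split => //.
move=> k /andP[le_ak le_kb]; apply: contraT => kY.
have ne_ka : k != a by apply: contraNneq kY => ->.
by have := min_b k.-1; rewrite prednK ?kY ?andbT; lia.
Qed.

Lemma dd_ge_gapped (X : {fset nat}) (h : nat -> nat) n :
  (forall i, i.+1 < n -> (h i.+1).+1 < h i) -> (forall i, i < n -> h i \in X) ->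
  n.*2 <= dd X + (h n.-1 == 0).
Proof.
move=> gap hX.
have gapP i j : i < j -> j < n -> (h j).+1 < h i.
  move=> + lt_jn; elim: j lt_jn => // j IH lt_jn.
  rewrite ltnS leq_eqVlt => /orP[/eqP-> | lt_ij]; first exact: gap.
  by have := gap _ lt_jn; have := IH (ltnW lt_jn) lt_ij; lia.
pose P := seq_fset tt [seq h i | i <- iota 0 n].
have memP (x : nat) : reflect (exists2 i, i < n & x = h i) (x \in P).
  rewrite seq_fsetE; apply: (iffP mapP) => [[i]|[i lt_in ->]].
    by rewrite mem_iota => /andP[_ lt_in] ->; exists i.
  by exists i; rewrite // mem_iota.
have inj : {in iota 0 n &, injective h}.
  move=> i j; rewrite !mem_iota /= !add0n => lt_in lt_jn eq_h.
  have := @gapP i j; have := @gapP j i; lia.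
have cardP : #|` P| = n.
  by rewrite size_seq_fset undup_id ?size_map ?size_iota // map_inj_in_uniq ?iota_uniq.
have subP : P `<=` X by apply/fsubsetP => x /memP[i /hX + ->].
have sparse (x : nat) : x \in P -> x.+1 \notin P.
  move=> /memP[i lt_in ->]; apply/memP => -[j lt_jn eq_h].
  case: (ltngtP i j) => [/gapP/(_ lt_jn) | /gapP/(_ lt_in) | eq_ij]; try lia.
  by move: eq_h; rewrite eq_ij; lia.
have zeroP : (0 \in P) <= (h n.-1 == 0).
  case: (memP 0) => //= -[i lt_in h0].
  have [lt_i|ge_i] := ltnP i n.-1; first by have := gapP _ _ lt_i; lia.
  by rewrite (_ : n.-1 = i) -?h0 //; lia.
by rewrite -{1}cardP; apply: leq_trans (dd_ge_sparse subP sparse) _; rewrite leq_add2l.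
Qed.

Section InSo.
Variable X : {fset nat}.
Hypothesis X_inSo : inSo X.

Lemma dd_inSo : dd X = size (dseq X).
Proof. by rewrite X_inSo size_dseq. Qed.

Lemma inSo_dseq_last k : size (dseq X) = k.*2.+1 -> nth 0 (dseq X) k.*2 = 0.
Proof.
move=> size_X; pose h i := nth 0 (dseq X) i.*2.
have gap i : i.+1 < k.+1 -> (h i.+1).+1 < h i.
  by move=> lt_i; apply: dseq_gap; lia.
have mem i : i < k.+1 -> h i \in X by move=> lt_i; apply: nth_dseq_mem; lia.
by have := dd_ge_gapped gap mem; rewrite dd_inSo size_X /h /=; case: eqP => // _; lia.
Qed.

Lemma inSo_dseq_pair k : k.*2.+1 < size (dseq X) ->
  nth 0 (dseq X) k.*2 = (nth 0 (dseq X) k.*2.+1).+1.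
Proof.
move=> lt_k; apply/eqP; rewrite eqn_leq dseq_ltn // andbT leqNgt.
apply/negP => gap_k.
have [M size_X] : exists M, size (dseq X) = M.*2 + odd (size (dseq X)).
  by exists (size (dseq X))./2; rewrite addnC odd_double_half.
pose g i := if i <= k then i.*2 else i.*2.-1.
pose h i := nth 0 (dseq X) (g i).
have gap i : i.+1 < M.+1 -> (h i.+1).+1 < h i.
  move=> lt_i; rewrite /h /g /=.
  case: (ltngtP i k) => [lt_ik|gt_ik|->] //; apply: dseq_gap; lia.
have mem i : i < M.+1 -> h i \in X.
  by move=> lt_i; apply: nth_dseq_mem; rewrite /g; case: ifP; lia.
have := dd_ge_gapped gap mem; rewrite dd_inSo /h /g ifF /=; last by lia.
case: (boolP (odd _)) size_X => _ size_X; last by case: eqP; lia.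
suff /negbTE-> : nth 0 (dseq X) M.*2.-1 != 0 by lia.
by rewrite -lt0n; apply: nth_dseq_gt0; lia.
Qed.

Lemma inSo_succ_mem x : x \in X -> odd (index x (dseq X)) -> x.+1 \in X.
Proof.
move=> xX odd_x; have lt_x := index_dseq_lt xX.
have def_x : index x (dseq X) = (index x (dseq X))./2.*2.+1 by lia.
rewrite -(nth_index_dseq xX) def_x -inSo_dseq_pair; last by lia.
by apply: nth_dseq_mem; lia.
Qed.

Lemma inSo_bottom_odd a : a \in X -> 0 < a -> a.-1 \notin X ->
  odd (index a (dseq X)).
Proof.
move=> aX a_gt0 a1X; apply/negPn/negP => even_a; have lt_a := index_dseq_lt aX.
have def_a : index a (dseq X) = (index a (dseq X))./2.*2 by lia.
case: (ltnP (index a (dseq X)).+1 (size (dseq X))) => [lt_a1|ge_a1].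
  move: a1X; rewrite -(nth_index_dseq aX) def_a inSo_dseq_pair /=; last by lia.
  by rewrite nth_dseq_mem //; lia.
move: a_gt0; rewrite -(nth_index_dseq aX) def_a inSo_dseq_last //; lia.
Qed.
End InSo.

Section Removal.
Variables X Y : {fset nat}.
Hypothesis X_inSo : inSo X.
Hypothesis subYX : Y `<=` X.
Hypothesis removed_odd : forall x, x \in X -> x \notin Y -> odd (index x (dseq X)).

Lemma removal_run_end_even b : b \in Y -> b.+1 \notin Y -> ~~ odd (index b (dseq X)).
Proof.
move=> bY b1Y; have bX := fsubsetP subYX _ bY.
have [b1X|b1X] := boolP (b.+1 \in X).
  by rewrite (index_dseq_succ bX b1X) /= negbK removed_odd.
by apply: contra b1X; apply: inSo_succ_mem.
Qed.

Lemma removal_run_parity a b : a <= b -> (forall k, a <= k <= b -> k \in Y) ->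
  b.+1 \notin Y -> odd (index a (dseq X)) = odd (b - a).
Proof.
move=> le_ab run b1Y; have bY : b \in Y by apply: run; rewrite le_ab leqnn.
rewrite (@index_dseq_run X a (b - a)) => [|l le_l]; last first.
  by apply: (fsubsetP subYX); apply: run; lia.
by rewrite subnKC // oddD (negbTE (removal_run_end_even bY b1Y)).
Qed.

Lemma floorS_removal : floorS Y = X.
Proof.
apply/fsetP => x; rewrite in_fsetU; apply/idP/idP.
  case/orP => [/(fsubsetP subYX) //|/imfsetP[a /= + ->]].
  rewrite inE => /andP[aY /odd_comp_minP[a_gt0 [b /is_compP[le_ab run _ b1Y] odd_ab]]].
  apply: contraTT odd_ab => a1X; rewrite subSn //= -(removal_run_parity le_ab run b1Y).
  by rewrite negbK inSo_bottom_odd // (fsubsetP subYX).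
move=> xX; apply/orP; have [xY|xY] := boolP (x \in Y); [by left | right].
have odd_x := removed_odd xX xY; have x1X := inSo_succ_mem X_inSo xX odd_x.
have idx := index_dseq_succ xX x1X.
have x1Y : x.+1 \in Y.
  by apply: contraT => x1Y; move: odd_x; rewrite idx /= removed_odd.
have [b le_b [run b1Y]] := fset_run_end x1Y.
apply/imfsetP; exists x.+1 => //=; rewrite inE x1Y /=.
apply/odd_comp_minP; split => //; exists b; first by apply/is_compP; rewrite xY orbT.
move: odd_x; rewrite idx /= (removal_run_parity le_b run b1Y).
by rewrite (_ : b.+1 - x.+1 = (b - x.+1).+1) //; lia.
Qed.

Lemma dd_removal : dd Y = dd X.
Proof.
apply/eqP; rewrite eqn_leq dd_subset //= dd_inSo //.
set m := size (dseq X); pose h i := nth 0 (dseq X) i.*2.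
have gap i : i.+1 < m.+1./2 -> (h i.+1).+1 < h i by move=> lt_i; apply: dseq_gap; lia.
have mem i : i < m.+1./2 -> h i \in Y.
  move=> lt_i; apply: contraT => hY; have lt_m : i.*2 < m by lia.
  by have := removed_odd (nth_dseq_mem lt_m) hY; rewrite index_nth_dseq // odd_double.
have [->|m_gt0] := posnP m; first by [].
have := dd_ge_gapped gap mem; rewrite /h.
have [odd_m|even_m] := boolP (odd m).
  by rewrite (_ : m.+1./2.-1 = m./2) ?inSo_dseq_last //=; lia.
suff /negbTE-> : nth 0 (dseq X) (m.+1./2.-1).*2 != 0 by lia.
by rewrite -lt0n; apply: nth_dseq_gt0; lia.
Qed.

End Removal.

Lemma ceilS_inSo (X : {fset nat}) : inSo X -> ceilS X = X.
Proof.
move=> X_inSo; apply/fsetP => x; rewrite in_fsetU orb_idr // => /imfsetP[b /= + _].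
rewrite inE => /andP[bX /odd_comp_maxP[a a_gt0 /andP[/is_compP[le_ab run a1X b1X]]]].
rewrite eqn0Ngt a_gt0 /= in a1X.
have no_removal y : y \in X -> y \notin X -> odd (index y (dseq X)) by move=> ->.
rewrite subSn //= -(removal_run_parity X_inSo (fsubset_refl X) no_removal le_ab run b1X).
by rewrite inSo_bottom_odd // run // leqnn le_ab.
Qed.

Theorem mainTheorem12 (s s' : {fset nat}) :
  inSo s ->
  s' `<` s ->
  (forall x, x \in s -> x \notin s' ->
     exists i, 1 <= 2 * i <= size (dseq s) /\ x = nth 0 (dseq s) (2 * i).-1) ->
  ~ inSo s' /\ floorS s' = s /\ prec s s' /\ dd s' = dd s.
Proof.
move=> s_inSo s's removed; have sub := fproper_sub s's.
have removed_odd x : x \in s -> x \notin s' -> odd (index x (dseq s)).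
  move=> xs xs'; have [i [/andP[i_gt0 le_i] ->]] := removed x xs xs'.
  by rewrite index_nth_dseq; lia.
have dd_s' := dd_removal s_inSo sub removed_odd.
have floor_s' := floorS_removal s_inSo sub removed_odd.
have ne_ss' : s <> s' by move=> eq_ss'; move: (fproper_neq s's); rewrite eq_ss' eqxx.
split; first by rewrite /inSo dd_s' s_inSo => eq_card; have := fproper_ltn_card s's; lia.
split=> //; split; last by [].
split=> //; right; split=> //.
by rewrite ceilS_inSo // floor_s' /le0 leqnn; apply/allP.
Qed.
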